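(* Let $\epsilon=\epsilon_1\cdots\epsilon_n$ be the reversal of an inversion sequence (equivalently, an integer sequence with $0\le\epsilon_i\le n-i$ for all $i$), and let $\epsilon'$ be the sequence obtained by applying Algorithm A (described below) to $\epsilon$. Then $\epsilon'$ is also the reversal of an inversion sequence.
   Context: An inversion sequence of length $n$ is an integer sequence $\epsilon_1\cdots\epsilon_n$ with $0\le\epsilon_i<i$ for all $i$; its reversal is $\epsilon_n\cdots\epsilon_1$. The reduction of an integer word replaces each occurrence of its $k$-th smallest distinct value by $k-1$; a consecutive pattern $\underline{p_1p_2p_3p_4}$ occurs in a sequence at position $i$ if the reduction of its entries in positions $i,\dots,i+3$ equals $p_1p_2p_3p_4$. Let $p=\underline{0102}$ and $q=\underline{0112}$. Algorithm A, on input an integer sequence $\mathrm{seq}=\epsilon_1\cdots\epsilon_n$: let $E_p$, $E_q$ be the sets of positions of occurrences of $p$, resp. $q$, in the input sequence; set $\mathrm{last}:=$ null. For $i=1,2,\dots,n$ in order: let $N_p,N_q$ be the sets of positions of occurrences of $p$, resp. $q$, in the current sequence. If $i-2\in E_p$: set $\mathrm{last}:=\mathrm{seq}[i]$ and $\mathrm{seq}[i]:=\mathrm{seq}[i-1]$. Else if $i-2\in E_q$: set $\mathrm{last}:=\mathrm{seq}[i]$ and $\mathrm{seq}[i]:=\mathrm{seq}[i-2]$. Else if $i-2\in N_p$ or $i-2\in N_q$: swap the values of $\mathrm{seq}[i]$ and $\mathrm{last}$. Output $\mathrm{seq}$. *)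

From mathcomp Require Import all_boot.
Set Implicit Arguments. Unset Strict Implicit. Unset Printing Implicit Defensive.

(* Sequences are lists of nats; positions are 1-based as in the paper:
   entry at position i of s is  nth 0 s (i-1). *)
Definition ent (s : seq nat) (i : nat) : nat := nth 0 s i.-1.

Definition reduce (w : seq nat) : seq nat :=
  let vals := sort leq (undup w) in [seq index x vals | x <- w].

Definition occurs (p s : seq nat) (i : nat) : bool :=
  [&& 1 <= i, i + 3 <= size s &
      reduce [:: ent s i; ent s i.+1; ent s i.+2; ent s i.+3] == p].

Definition pat_p : seq nat := [:: 0; 1; 0; 2].
Definition pat_q : seq nat := [:: 0; 1; 1; 2].

Definition setent (s : seq nat) (i x : nat) : seq nat := set_nth 0 s i.-1 x.

(* One step of Algorithm A at index i; orig is the input sequence,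
   state = (current sequence, last). *)
Definition algA_step (orig : seq nat) (st : seq nat * nat) (i : nat)
  : seq nat * nat :=
  let: (s, last) := st in
  if occurs pat_p orig (i - 2) then (setent s i (ent s i.-1), ent s i)
  else if occurs pat_q orig (i - 2) then (setent s i (ent s (i - 2)), ent s i)
  else if occurs pat_p s (i - 2) || occurs pat_q s (i - 2)
       then (setent s i last, ent s i)
  else (s, last).

Definition algA (s : seq nat) : seq nat :=
  (foldl (algA_step s) (s, 0) (iota 1 (size s))).1.

Definition rev_inv_seq (s : seq nat) : bool :=
  all (fun i => ent s i <= size s - i) (iota 1 (size s)).

(* Every entry that Algorithm A writes at position i is smaller than the
   original entry at position i+1.  Each of its three rules fires on an
   occurrence of 0102 or 0112 at i-2, whose last letter is its strict maximum,
   so the written value (an original or current entry at i-2 or i-1, or the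
   saved value [last]) lies below the entry at i+1, which has not been touched
   yet.  Hence every output entry is either unchanged or below the next input
   entry, and in both cases it is at most n - i. *)

From mathcomp Require Import all_boot.
From mathcomp Require Import zify.

Set Implicit Arguments.
Unset Strict Implicit.
Unset Printing Implicit Defensive.

Lemma reduce_ltn (w : seq nat) a b : a < size w -> b < size w ->
  nth 0 (reduce w) a < nth 0 (reduce w) b -> nth 0 w a < nth 0 w b.
Proof.
move=> ha hb; rewrite /reduce !(nth_map 0) //.
set V := sort leq (undup w); set x := nth 0 w a; set y := nth 0 w b => lt_xy.
have inV z : z \in w -> z \in V by rewrite mem_sort mem_undup.
have le_xy : x <= y.
  by apply: (sorted_ltn_index leq_trans (sort_sorted leq_total _)) lt_xy;
     apply: inV; apply: mem_nth.
by rewrite ltn_neqAle le_xy andbT; apply: contraTneq lt_xy => ->; rewrite ltnn.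
Qed.

Lemma occurs_ltn p s i a b : occurs p s i -> a < 4 -> b < 4 ->
  nth 0 p a < nth 0 p b -> ent s (i + a) < ent s (i + b).
Proof.
case/and3P=> _ _ /eqP <- ha hb.
set w := [:: ent s i; _; _; _]; move/(@reduce_ltn w _ _ ha hb).
by case: a ha => [|[|[|[|]]]] // _; case: b hb => [|[|[|[|]]]] // _;
   rewrite ?addn0 ?addn1 ?addn2 ?addn3.
Qed.

Lemma occurs_pq_last_max s i a : occurs pat_p s i || occurs pat_q s i ->
  a < 3 -> ent s (i + a) < ent s (i + 3).
Proof.
by case/orP=> occ ha; apply: (occurs_ltn occ) => //; case: a ha => [|[|[|]]].
Qed.

Lemma algA_trigger_bounds s i :
  occurs pat_p s (i - 2) || occurs pat_q s (i - 2) ->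
  [/\ 3 <= i, i < size s, ent s (i - 2) < ent s i.+1,
      ent s i.-1 < ent s i.+1 & ent s i < ent s i.+1].
Proof.
move=> occ; have lt_last a (ha : a < 3) := occurs_pq_last_max occ ha.
have [i_ge3 i_lt] : 3 <= i /\ i < size s.
  by case/orP: occ => /and3P[? ? _]; split; lia.
have e0 : i - 2 + 0 = i - 2 by lia.
have e1 : i - 2 + 1 = i.-1 by lia.
have e2 : i - 2 + 2 = i by lia.
have e3 : i - 2 + 3 = i.+1 by lia.
by split => //;
   [move: (lt_last 0 isT) | move: (lt_last 1 isT) | move: (lt_last 2 isT)];
   rewrite ?e0 ?e1 ?e2 e3.
Qed.

Definition agree_beyond (m : nat) (s o : seq nat) : Prop :=
  forall j, m < j -> ent s j = ent o j.

Lemma occurs_agree p s o m i : size s = size o -> agree_beyond m s o ->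
  m < i -> occurs p s i = occurs p o i.
Proof. by move=> hs he hi; rewrite /occurs hs !he //; lia. Qed.

(* State after processing positions [1..k] of the input [o].  When [l] has
   been set, it is the original entry at the last modified position [m],
   and that entry lies below the original entry at [m+1]. *)
Definition algA_inv (o : seq nat) (k : nat) (st : seq nat * nat) : Prop :=
  let: (s, l) := st in
  [/\ size s = size o, agree_beyond k s o,
      forall j, 0 < j -> ent s j = ent o j \/ ent s j < ent o j.+1 &
      l = 0 \/ exists m, [/\ m <= k, l < ent o m.+1 & agree_beyond m s o]].

Lemma algA_inv_mono o k k' st : k <= k' -> algA_inv o k st -> algA_inv o k' st.
Proof.
case: st => s l le_kk' [hs he hb hl]; split => //.
- by move=> j hj; apply: he; lia.
- by case: hl => [->|[m [hm hlm hem]]]; [left | right; exists m; split => //; lia].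
Qed.

Lemma algA_inv_set o i s l v : algA_inv o i.-1 (s, l) -> 0 < i <= size o ->
  v < ent o i.+1 -> ent o i < ent o i.+1 ->
  algA_inv o i (setent s i v, ent s i).
Proof.
move=> [hs he hb _] /andP[i_gt0 i_le] hv ho.
have ent_set j : 0 < j -> ent (setent s i v) j = if j == i then v else ent s j.
  move=> j_gt0; rewrite /ent /setent nth_set_nth /=.
  by congr (if _ then _ else _); apply/eqP/eqP => [|->] //; lia.
have agree_i : agree_beyond i (setent s i v) o.
  by move=> j hj; rewrite ent_set; [case: eqP => [|_]; [lia | apply: he; lia] | lia].
split => //.
- by rewrite /setent size_set_nth hs; apply/maxn_idPr; lia.
- by move=> j hj; rewrite ent_set //; case: eqP => [->|_]; [right | exact: hb].
- by right; exists i; split => //; rewrite he //; lia.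
Qed.

Lemma algA_last_lt_trigger o i s l : algA_inv o i.-1 (s, l) ->
  ~~ (occurs pat_p o (i - 2) || occurs pat_q o (i - 2)) ->
  occurs pat_p s (i - 2) || occurs pat_q s (i - 2) -> l < ent o i.+1.
Proof.
move=> [hs he _ hl] not_occ_o occ_s.
have [i_ge3 _ lt2 lt1 lt0] := algA_trigger_bounds occ_s.
have <- : ent s i.+1 = ent o i.+1 by apply: he; lia.
case: hl => [-> | [m [hm hlm hem]]]; first lia.
have [m_lt | m_ge] := ltnP m (i - 2).
  (* Nothing from position i-2 on has changed, so the occurrence is original. *)
  by move: not_occ_o; rewrite -!(occurs_agree _ hs hem m_lt) occ_s.
rewrite -hem // in hlm.
have [e | e] : m.+1 = i.-1 \/ m.+1 = i by lia.
all: by rewrite e in hlm; lia.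
Qed.

Lemma algA_inv_step o i st : algA_inv o i.-1 st -> 0 < i <= size o ->
  algA_inv o i (algA_step o st i).
Proof.
case: st => s l inv hi; have [_ he hb _] := inv.
have below j x : 0 < j -> ent o j < x -> ent o j.+1 < x -> ent s j < x.
  by move=> j_gt0 hj hj1; case: (hb j j_gt0) => [->|]; lia.
rewrite /algA_step; case: ifP => [occ_p | not_p].
  have [? ? ? ? ?] := algA_trigger_bounds (introT orP (or_introl occ_p)).
  by apply: (algA_inv_set inv) => //; apply: below; rewrite ?prednK //; lia.
case: ifP => [occ_q | not_q].
  have [? ? ? ? ?] := algA_trigger_bounds (introT orP (or_intror occ_q)).
  have e : (i - 2).+1 = i.-1 by lia.
  by apply: (algA_inv_set inv) => //; apply: below; rewrite ?e //; lia.
case: ifP => [occ_s | _]; last by apply: algA_inv_mono inv; lia.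
have [? ? ? ? ?] := algA_trigger_bounds occ_s.
have l_lt : l < ent o i.+1.
  by apply: (algA_last_lt_trigger inv) occ_s; rewrite not_p not_q.
apply: (algA_inv_set inv) => //.
by rewrite -!he //; lia.
Qed.

Lemma algA_inv_foldl o k : k <= size o ->
  algA_inv o k (foldl (algA_step o) (o, 0) (iota 1 k)).
Proof.
elim: k => [_ | k IH hk]; first by split => // [j _|]; left.
rewrite -addn1 iotaD foldl_cat /= add1n addn1.
by apply: algA_inv_step; [apply: IH; lia | lia].
Qed.

Lemma rev_inv_seq_below_next o s : rev_inv_seq o -> size s = size o ->
  (forall j, 0 < j -> ent s j = ent o j \/ ent s j < ent o j.+1) ->
  rev_inv_seq s.
Proof.
move=> /allP ho hs hb; apply/allP => j; rewrite hs mem_iota => /andP[j_gt0 _].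
have bound_o i : 0 < i -> ent o i <= size o - i.
  move=> i_gt0; have [i_le | i_gt] := leqP i (size o).
    by apply: ho; rewrite mem_iota; lia.
  by rewrite /ent nth_default //; lia.
by case: (hb j j_gt0) => [-> | lt]; [exact: bound_o | have := bound_o j.+1; lia].
Qed.

Theorem corollary2 (e : seq nat) :
  rev_inv_seq e -> rev_inv_seq (algA e).
Proof.
move=> e_rinv; rewrite /algA.
case: foldl (algA_inv_foldl (leqnn (size e))) => s l [hs _ hb _].
exact: rev_inv_seq_below_next e_rinv hs hb.
Qed.
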